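(* Let $N\in\mathbb{N}$ and let $u$ and $v$ be nontrivial, coprime divisors of $N$. Let $b\in\mathbb{Z}$ and $f\in\mathbb{Z}[X]$ with $f(b)=N$ such that (1) $\gcd(\mathrm{lc}(f),N)=1$, where $\mathrm{lc}(f)$ is the leading coefficient of $f$, and (2) $d:=\deg f$ is smaller than the largest prime factor of $v$. Then there exists $x\in\mathbb{Z}$ with $u\mid f(x)$ and $v\nmid f(x)$. *)

From mathcomp Require Import all_boot all_order all_algebra.
Set Implicit Arguments. Unset Strict Implicit. Unset Printing Implicit Defensive.

From mathcomp Require Import all_boot all_order all_algebra.
Import GRing.Theory Num.Theory.
Local Open Scope ring_scope.

(* Let p be the largest prime factor of v. Since u | N = f(b), u divides f(x)
   for every x = b + u t. As p does not divide u, these x run through all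
   residues mod p, while f mod p is a nonzero polynomial of degree d < p and so
   has a non-root in F_p. Hence p, and a fortiori v, fails to divide some f(b + u t). *)

Lemma dvdz_horner_sub (f : {poly int}) (x y : int) : (x - y %| f.[x] - f.[y])%Z.
Proof.
have : root (f - f.[y]%:P) y by rewrite /root !hornerE subrr.
case/factor_theorem => q Hq.
have := congr1 (horner^~ x) Hq; rewrite /= !hornerE => ->.
exact: dvdz_mull.
Qed.

Lemma dvdz_horner_progression (f : {poly int}) (m b t : int) :
  (m %| f.[b])%Z -> (m %| f.[b + m * t])%Z.
Proof.
move=> mfb; rewrite -(subrK f.[b] f.[_]) rpredD //.
apply: dvdz_trans (dvdz_horner_sub f _ _); rewrite addrAC subrr add0r.
exact: dvdz_mulr.
Qed.

Lemma exists_nonroot (F : finFieldType) (g : {poly F}) :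
  g != 0 -> (size g <= #|F|)%N -> exists y, ~~ root g y.
Proof.
move=> g0 sg; apply/existsP; apply: contraLR sg => /existsPn allroot.
rewrite -ltnNge cardE; apply: max_poly_roots g0 _ (enum_uniq _).
by apply/allP => y _; rewrite -[root g y]negbK allroot.
Qed.

Lemma exists_horner_ndvdz (p : nat) (f : {poly int}) :
  prime p -> ~~ (p%:Z %| lead_coef f)%Z -> (size f <= p)%N ->
  exists x : int, ~~ (p%:Z %| f.[x])%Z.
Proof.
move=> p_pr plc sf; have pchar := pchar_Fp p_pr.
pose g := map_poly (intmul (1 : 'F_p)) f.
have size_g : size g = size f.
  by apply: size_map_poly_id0; rewrite -(dvdz_pcharf pchar).
have g0 : g != 0.
  rewrite -size_poly_eq0 size_g size_poly_eq0 -lead_coef_eq0.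
  by apply: contraNneq plc => ->; rewrite dvdz0.
have [|y gy] := exists_nonroot _ g g0; first by rewrite size_g card_Fp.
by exists (y : nat)%:Z; rewrite (dvdz_pcharf pchar) -horner_map /= -pmulrn natr_Zp.
Qed.

Lemma prime_dvdzM (p : nat) (m n : int) :
  prime p -> (p%:Z %| m * n)%Z = (p%:Z %| m)%Z || (p%:Z %| n)%Z.
Proof. by move=> p_pr; rewrite !dvdzE /= abszM Euclid_dvdM. Qed.

Lemma prime_dvdzX (p : nat) (m : int) (k : nat) :
  prime p -> (p%:Z %| m ^+ k)%Z -> (p%:Z %| m)%Z.
Proof. by move=> p_pr; rewrite !dvdzE /= abszX Euclid_dvdX // => /andP[]. Qed.

(* [f (b + u X)] has the degree of [f] and leading coefficient [lc(f) u^d]. *)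
Lemma exists_progression_horner_ndvdz (p : nat) (f : {poly int}) (b u : int) :
  prime p -> ~~ (p%:Z %| lead_coef f)%Z -> ~~ (p%:Z %| u)%Z -> (size f <= p)%N ->
  exists t : int, ~~ (p%:Z %| f.[b + u * t])%Z.
Proof.
move=> p_pr plc pu sf; pose q := u%:P * 'X + b%:P.
have u0 : u != 0 by apply: contraNneq pu => ->; rewrite dvdz0.
have size_q : size q = 2%N by rewrite size_MXaddC polyC_eq0 (negbTE u0) size_polyC u0.
have lead_q : lead_coef q = u by rewrite lead_coefE size_q coefD coefMX !coefC addr0.
have plead : ~~ (p%:Z %| lead_coef (f \Po q))%Z.
  rewrite lead_coef_comp ?size_q // lead_q prime_dvdzM // negb_or plc /=.
  by apply: contra pu; apply: prime_dvdzX.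
have [|t pft] := exists_horner_ndvdz _ _ p_pr plead; first by rewrite size_comp_poly2.
by exists t; move: pft; rewrite horner_comp /q !hornerE addrC.
Qed.

Theorem lemma2p5 (N u v : nat) (b : int) (f : {poly int}) :
  (u %| N)%N -> u != 1%N -> u != N ->
  (v %| N)%N -> v != 1%N -> v != N ->
  coprime u v ->
  f.[b] = N%:Z ->
  coprimez (lead_coef f) N ->
  ((size f).-1 < max_pdiv v)%N ->
  exists x : int, (u%:Z %| f.[x])%Z /\ ~~ (v%:Z %| f.[x])%Z.
Proof.
move=> uN _ _ vN v1 vNN cuv fb clc hd.
have v_gt1 : (1 < v)%N.
  rewrite ltn_neqAle eq_sym v1 lt0n /=; apply: contraNneq vNN => v0.
  by move: vN; rewrite v0 dvd0n => /eqP ->.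
set p := max_pdiv v; have p_pr : prime p := max_pdiv_prime v_gt1.
have pv : (p %| v)%N := max_pdiv_dvd v.
have plc : ~~ (p%:Z %| lead_coef f)%Z.
  have : coprimez (lead_coef f) p by apply: coprimez_dvdr (dvdn_trans pv vN) clc.
  by rewrite coprimezE coprime_sym prime_coprime // dvdzE.
have pu : ~~ (p%:Z %| u%:Z)%Z.
  by rewrite dvdzE /= -prime_coprime // coprime_sym (coprime_dvdr pv cuv).
have [|t pft] := exists_progression_horner_ndvdz _ _ b _ p_pr plc pu.
  by move: hd; case: (size f).
exists (b + u%:Z * t); split.
  by apply: dvdz_horner_progression; rewrite fb dvdzE.
by apply: contra pft; apply: dvdz_trans; rewrite dvdzE.
Qed.
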